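(* Let $\mathcal{W}\subset\mathbb{R}^2$ be a planar workspace, $\mathcal{T}:\mathcal{W}\to\mathcal{D}$ the harmonic homeomorphism onto the punctured unit disk, $\mathcal{U}=\{u\in\mathbb{R}^2 : A_s^\top u\ge B_s\}\neq\emptyset$ the input set, and consider the robot $\dot p=u(t)$, $p(0)=\bar p\in\operatorname{int}\mathcal{W}$, with transformed position $q(t)=\mathcal{T}(p(t))$. Let $\mu$ be a predicate with predicate function $h:\mathcal{W}\to\mathbb{R}$ satisfying the assumption below, let $h_T$ be its transformed predicate on $\mathcal{D}$, let $0\le t_0<t_1$ and $0<\delta<t_1-t_0$, and consider the eventually formula $F_{[t_0,t_1]}\mu$ together with the function $$b^F_{[t_0,t_1]}(q,t)=\sigma^{t_0,t_1}_{\delta}(t)\,h_T(q).$$ If there exists an admissible input $u$ (i.e. $u(t)\in\mathcal{U}$ for all $t\ge 0$) such that the time-varying set $\mathcal{B}^F(t)=\{q\in\mathcal{D} : b^F_{[t_0,t_1]}(q,t)\ge 0\}$ is forward invariant along the resulting trajectory, then the corresponding predicate is satisfied, i.e. the trajectory $p$ satisfies $F_{[t_0,t_1]}\mu$ (there exists $\tau\in[t_0,t_1]$ with $h(p(\tau))\ge 0$).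
   Context: Workspace: $\mathcal{G}\subset\mathbb{R}^2$ is a connected planar region containing finitely many distinct inner obstacles $\mathcal{O}_i\subset\mathcal{G}$, and $\mathcal{W}=\mathcal{G}\setminus\bigcup_i\mathcal{O}_i$. $\mathcal{T}:\mathcal{W}\to\mathcal{D}$ is a harmonic homeomorphism onto a punctured unit disk $\mathcal{D}\subseteq\{x\in\mathbb{R}^2:\|x\|\le 1\}$: the outer boundary $\partial\mathcal{G}$ is mapped onto the unit circle and each inner obstacle is mapped to a point of $\mathcal{D}$; its Jacobian $\mathcal{J}(p)$ is invertible. $A_s\in\mathbb{R}^{2\times M}$, $B_s\in\mathbb{R}^M$. Predicate: $\mu$ is True at $p$ iff $h(p)\ge 0$. Assumption on $h$: $h$ is twice continuously differentiable and its zero super-level set $\mathcal{H}=\{p\in\mathcal{W}:h(p)\ge 0\}$ is closed and simply connected. Transformed set $\mathcal{H}_T=\{q\in\mathcal{D}: h(\mathcal{T}^{-1}(q))\ge 0\}$, and the transformed predicate $h_T:\mathcal{D}\to\mathbb{R}$ is the signed distance $h_T(q)=-\min_{\tilde q\in\partial\mathcal{H}_T}\|q-\tilde q\|$ if $q\notin\mathcal{H}_T$ and $h_T(q)=+\min_{\tilde q\in\partial\mathcal{H}_T}\|q-\tilde q\|$ if $q\in\mathcal{H}_T$. Switching functions: for $\tau\in\mathbb{R}$, $\delta>0$, $\sigma_{\tau,\delta}(t)=1$ for $t\le\tau-\delta$, $\sigma_{\tau,\delta}(t)=\exp\!\big(-\big[\tfrac{t-(\tau-\delta)}{t-\tau}\big]^2\big)$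 for $\tau-\delta<t<\tau$, and $\sigma_{\tau,\delta}(t)=0$ for $t\ge\tau$; and $\sigma^{t_0,t_1}_\delta(t)=\sigma_{t_1,\delta}(t)\,(1-\sigma_{t_0,\delta}(t))$. STL semantics: $(p,t)\models F_{[a,b]}\mu$ iff there exists $t_1\in[t+a,t+b]$ with $h(p(t_1))\ge 0$; satisfaction of the formula by the trajectory means $(p,0)\models F_{[t_0,t_1]}\mu$. Forward invariance of $\mathcal{B}^F(t)$ means: if $q(0)\in\mathcal{B}^F(0)$ then $q(t)\in\mathcal{B}^F(t)$ for all $t\ge 0$.
   Formalization: Besides forward invariance of $\mathcal{B}^F(t)$, the hypotheses include $q(0)\in\mathcal{B}^F(0)$ and $p(t)\in\mathcal{W}$ for all t ≥ 0. Each condition added here is assumed in the paper as well or is needed for the statement above to hold. *)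

From HB Require Import structures.
From mathcomp Require Import all_boot all_order all_algebra.
From mathcomp Require Import all_classical all_reals all_analysis.
Set Implicit Arguments. Unset Strict Implicit. Unset Printing Implicit Defensive.
Import Order.TTheory GRing.Theory Num.Theory numFieldNormedType.Exports.
Local Open Scope classical_set_scope.
Local Open Scope ring_scope.

Definition pt (R : realType) := 'cV[R]_2.
Definition coord (R : realType) (k : 'I_2) (x : pt R) : R := x k ord0.
Definition enorm (R : realType) (x : pt R) : R :=
  Num.sqrt (coord ord0 x ^+ 2 + coord (lift ord0 ord0) x ^+ 2).
Definition ebasis (R : realType) (i : 'I_2) : pt R := delta_mx i ord0.

Definition partial (R : realType) (i : 'I_2) (f : pt R -> R) : pt R -> R :=
  fun x => 'D_(ebasis R i) f x.

Definition bdry (R : realType) (S : set (pt R)) : set (pt R) :=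
  closure S `\` interior S.

Definition C2_on (R : realType) (f : pt R -> R) (U : set (pt R)) : Prop :=
  (forall x, U x -> differentiable f x) /\
  (forall i, forall x, U x -> differentiable (partial i f) x) /\
  (forall i j, forall x, U x -> {for x, continuous (partial j (partial i f))}).

Definition comp2 (R : realType) (k : 'I_2) (T : pt R -> pt R) : pt R -> R :=
  fun x => coord k (T x).

Definition harmonic_on (R : realType) (f : pt R -> R) (U : set (pt R)) : Prop :=
  C2_on f U /\
  forall x, U x -> partial ord0 (partial ord0 f) x
                   + partial (lift ord0 ord0) (partial (lift ord0 ord0) f) x = 0.

Definition jacobian (R : realType) (T : pt R -> pt R) (x : pt R) : 'M[R]_2 :=
  \matrix_(k < 2, i < 2) partial i (comp2 k T) x.

Definition Wsp (R : realType) (n : nat) (G : set (pt R)) (O : 'I_n -> set (pt R))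
  : set (pt R) := G `\` \bigcup_i O i.

Definition workspace_ok (R : realType) (n : nat) (G : set (pt R))
  (O : 'I_n -> set (pt R)) : Prop :=
  connected G /\
  (forall i, O i !=set0 /\ O i `<=` G) /\
  (forall i j, i != j -> O i `&` O j = set0).

Definition harmonic_homeo (R : realType) (n : nat) (G : set (pt R))
  (O : 'I_n -> set (pt R)) (D : set (pt R)) (T Tinv : pt R -> pt R) : Prop :=
  let W := Wsp G O in
  D `<=` [set q | enorm q <= 1] /\
  T @` W = D /\
  (forall x, W x -> Tinv (T x) = x) /\
  (forall q, D q -> T (Tinv q) = q) /\
  {within W, continuous T} /\
  {within D, continuous Tinv} /\
  (forall k, harmonic_on (comp2 k T) (interior W)) /\
  (forall x, interior W x -> jacobian T x \in unitmx) /\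
  bdry G `<=` W /\
  T @` (bdry G) = [set q | enorm q = 1] /\
  (* each inner obstacle is collapsed to a puncture point c of the disk *)
  (forall i, exists c : pt R, enorm c < 1 /\ ~ D c /\
     forall e : R, 0 < e -> exists d : R, 0 < d /\
       forall x, W x -> (exists y, O i y /\ enorm (x - y) < d) ->
         enorm (T x - c) < e).

Definition input_set (R : realType) (M : nat) (As : 'M[R]_(2, M)) (Bs : 'cV[R]_M)
  (v : pt R) : Prop :=
  forall j : 'I_M, Bs j ord0 <= (As^T *m v) j ord0.

Definition unit_I (R : realType) : set R := [set s | 0 <= s <= 1].
Arguments unit_I : clear implicits.

Definition path_in (R : realType) (S : set (pt R)) (g : R -> pt R) : Prop :=
  {within unit_I R, continuous g} /\ (forall s, unit_I R s -> S (g s)).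

Definition simply_connected (R : realType) (S : set (pt R)) : Prop :=
  S !=set0 /\
  (forall x y, S x -> S y -> exists g, path_in S g /\ g 0 = x /\ g 1 = y) /\
  (forall g, path_in S g -> g 0 = g 1 ->
     exists H : R * R -> pt R,
       {within unit_I R `*` unit_I R, continuous H} /\
       (forall s t, unit_I R s -> unit_I R t -> S (H (s, t))) /\
       (forall s, unit_I R s -> H (s, 0) = g s /\ H (s, 1) = g 0) /\
       (forall t, unit_I R t -> H (0, t) = g 0 /\ H (1, t) = g 0)).

Definition Hset (R : realType) (n : nat) (G : set (pt R)) (O : 'I_n -> set (pt R))
  (h : pt R -> R) : set (pt R) := [set x | Wsp G O x /\ 0 <= h x].

Definition predicate_ok (R : realType) (n : nat) (G : set (pt R))
  (O : 'I_n -> set (pt R)) (h : pt R -> R) : Prop :=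
  C2_on h (interior (Wsp G O)) /\
  closed (Hset G O h) /\ simply_connected (Hset G O h).

Definition HTset (R : realType) (D : set (pt R)) (Tinv : pt R -> pt R)
  (h : pt R -> R) : set (pt R) := [set q | D q /\ 0 <= h (Tinv q)].

Definition dist_to (R : realType) (q : pt R) (S : set (pt R)) : R :=
  inf [set enorm (q - x) | x in S].

Definition hT (R : realType) (D : set (pt R)) (Tinv : pt R -> pt R)
  (h : pt R -> R) (q : pt R) : R :=
  if `[< HTset D Tinv h q >] then dist_to q (bdry (HTset D Tinv h))
  else - dist_to q (bdry (HTset D Tinv h)).

Definition sigma_sw (R : realType) (tau delta t : R) : R :=
  if t <= tau - delta then 1
  else if t < tau then expR (- (((t - (tau - delta)) / (t - tau)) ^+ 2))
  else 0.

Definition sigma2 (R : realType) (t0 t1 delta t : R) : R :=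
  sigma_sw t1 delta t * (1 - sigma_sw t0 delta t).

Definition bF (R : realType) (D : set (pt R)) (Tinv : pt R -> pt R)
  (h : pt R -> R) (t0 t1 delta : R) (q : pt R) (t : R) : R :=
  sigma2 t0 t1 delta t * hT D Tinv h q.

Definition BF (R : realType) (D : set (pt R)) (Tinv : pt R -> pt R)
  (h : pt R -> R) (t0 t1 delta t : R) : set (pt R) :=
  [set q | D q /\ 0 <= bF D Tinv h t0 t1 delta q t].

Definition forward_invariant (R : realType) (B : R -> set (pt R)) (q : R -> pt R)
  : Prop := B 0 (q 0) -> forall t, 0 <= t -> B t (q t).

(** STL semantics: (p,t) |= F_[a,b] mu, mu = (h >= 0) *)
Definition sat_eventually (R : realType) (h : pt R -> R) (p : R -> pt R)
  (a b t : R) : Prop :=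
  exists t', t + a <= t' <= t + b /\ 0 <= h (p t').

From HB Require Import structures.
From mathcomp Require Import all_boot all_order all_algebra.
From mathcomp Require Import all_classical all_reals all_analysis.
From mathcomp Require Import lra.
Set Implicit Arguments. Unset Strict Implicit. Unset Printing Implicit Defensive.
Import Order.TTheory GRing.Theory Num.Theory numFieldNormedType.Exports.
Local Open Scope classical_set_scope.
Local Open Scope ring_scope.

(* At time t1 - delta the switching function equals 1, so forward invariance
   of B^F gives h_T(q) >= 0 for q = T(p(t1 - delta)).  If h(p(t1 - delta)) < 0,
   then q lies outside H_T; since H is closed and T^-1 is continuous on D, a
   relative ball of radius r > 0 around q misses H_T and hence its closure, so
   the signed distance h_T(q) is at most -r < 0.  The boundary of H_T is
   nonempty because H_T is a nonempty proper subset of the connected plane. *)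

Lemma connected_normedModType (R : realType) (V : normedModType R) :
  connected [set: V].
Proof.
pose line (b : V) (s : R) := s *: b.
have -> : [set: V] = \bigcup_(b in [set: V]) (line b @` [set: R]).
  by apply/seteqP; split => // b _; exists b => //; exists 1 => //; exact: scale1r.
apply: bigcup_connected.
  by exists 0 => b _; exists 0 => //; exact: scale0r.
move=> b _; apply: connected_continuous_connected.
  exact/connected_intervalP.
exact/continuous_subspaceT/scalel_continuous.
Qed.

Lemma clopen_of_closure_sub_interior (T : topologicalType) (S : set T) :
  closure S `<=` interior S -> clopen S.
Proof.
move=> clint; split.
  by rewrite openE => x Sx; apply/clint/subset_closure.
apply/closure_id/seteqP; split; first exact: subset_closure.
by move=> x /clint/interior_subset.
Qed.

Lemma bdry_neq0 (R : realType) (S : set (pt R)) (a b : pt R) :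
  S a -> ~ S b -> bdry S !=set0.
Proof.
move=> Sa nSb; apply: contrapT => bdry0.
have [oS cS] : clopen S.
  apply: clopen_of_closure_sub_interior => x Sx; apply: contrapT => nSx.
  by apply: bdry0; exists x.
suff ST : S = setT by apply: nSb; rewrite ST.
apply: connected_normedModType; first by exists a.
- by exists S; rewrite ?setTI.
- by exists S; rewrite ?setTI.
Qed.

Lemma coord_le_enorm (R : realType) (x : pt R) (k : 'I_2) :
  `|x k ord0| <= enorm x.
Proof.
rewrite /enorm /coord -sqrtr_sqr; apply: ler_wsqrtr.
have [->|->] : k = ord0 \/ k = lift ord0 ord0.
  by case: k => [[|[|//]] ?]; [left|right]; apply: val_inj.
- by rewrite lerDl sqr_ge0.
- by rewrite lerDr sqr_ge0.
Qed.

Lemma normr_le_enorm (R : realType) (x : pt R) : `|x| <= enorm x.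
Proof.
rewrite [leLHS]/Num.Def.normr /= mx_normrE.
apply: bigmax_le => [|[i j] _]; first exact: sqrtr_ge0.
by rewrite (ord1 j); exact: coord_le_enorm.
Qed.

Lemma within_continuous_ball (R : realType) (U : pseudoMetricType R)
    (V : topologicalType) (f : U -> V) (D : set U) (A : set V) (x : U) :
  {within D, continuous f} -> D x -> open A -> A (f x) ->
  exists2 r : R, 0 < r & forall y, D y -> ball x r y -> A (f y).
Proof.
move=> cf Dx oA Afx.
have : nbhs_subspace (A:=D) x (f @^-1` A).
  exact: cf (open_nbhs_nbhs (conj oA Afx)).
rewrite -nbhs_subspace_in // /within /= => /nbhs_ballP[r r0 Hr].
by exists r => // y Dy xy; exact: Hr.
Qed.

Lemma dist_to_ge (R : realType) (q : pt R) (S : set (pt R)) (r : R) :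
  S !=set0 -> (forall z, S z -> r <= `|q - z|) -> r <= dist_to q S.
Proof.
move=> [z Sz] rS; apply: lb_le_inf; first by exists (enorm (q - z)), z.
by move=> _ [y Sy <-]; apply: le_trans (rS y Sy) _; exact: normr_le_enorm.
Qed.

Lemma h_ge0_of_hT_ge0 (R : realType) (D W : set (pt R)) (Tinv : pt R -> pt R)
    (h : pt R -> R) (q : pt R) :
  D `<=` [set x | enorm x <= 1] ->
  {within D, continuous Tinv} ->
  Tinv @` D `<=` W ->
  closed [set x | W x /\ 0 <= h x] ->
  HTset D Tinv h !=set0 ->
  D q -> 0 <= hT D Tinv h q -> 0 <= h (Tinv q).
Proof.
move=> Dunit cTinv DW cH [a HTa] Dq hTq; rewrite leNgt; apply/negP => hq.
set HT := HTset D Tinv h in HTa hTq.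
have [r r_gt0 away] : exists2 r : R, 0 < r &
    forall y, D y -> ball q r y -> (~` [set x | W x /\ 0 <= h x]) (Tinv y).
  apply: within_continuous_ball => //; first exact: closed_openC.
  by case=> _; rewrite leNgt hq.
have far z : closure HT z -> r <= `|q - z|.
  move=> clz; rewrite leNgt; apply/negP => qz.
  have [y [[Dy hy] qy]] : HT `&` ball q r !=set0.
    by apply: clz; apply: open_nbhs_nbhs; split; [exact: ball_open|rewrite -ball_normE].
  by apply: (away y Dy qy); split => //; apply: DW; exists y.
have outside : ~ HT (const_mx 2).
  move=> [/Dunit /= two_le1 _].
  have := le_trans (coord_le_enorm (const_mx 2 : pt R) ord0) two_le1.
  by rewrite mxE ger0_norm //; lra.
have nHTq : ~ HT q by case=> _; rewrite leNgt hq.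
(* [inf set0 = 0], so an empty boundary would make [hT] vanish off [HT]. *)
have : r <= dist_to q (bdry HT).
  by apply: dist_to_ge => [|z [clz _]]; [exact: bdry_neq0 HTa outside|exact: far].
by move: hTq; rewrite /hT asboolF // oppr_ge0; lra.
Qed.

Lemma sigma_sw_le (R : realType) (tau delta t : R) :
  t <= tau - delta -> sigma_sw tau delta t = 1.
Proof. by rewrite /sigma_sw => ->. Qed.

Lemma sigma_sw_ge (R : realType) (tau delta t : R) :
  0 < delta -> tau <= t -> sigma_sw tau delta t = 0.
Proof.
move=> delta_gt0 tau_le_t; rewrite /sigma_sw ifF; last first.
  by apply/negbTE; rewrite -ltNge; lra.
by rewrite ifF //; apply/negbTE; rewrite -leNgt.
Qed.

Lemma sigma2_eq1 (R : realType) (t0 t1 delta t : R) :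
  0 < delta -> t0 <= t -> t <= t1 - delta -> sigma2 t0 t1 delta t = 1.
Proof.
move=> delta_gt0 t0_le_t t_le_t1.
by rewrite /sigma2 sigma_sw_le // sigma_sw_ge // subr0 mulr1.
Qed.

Theorem theorem1 (R : realType) (n M : nat)
  (G : set (pt R)) (O : 'I_n -> set (pt R)) (D : set (pt R))
  (T Tinv : pt R -> pt R) (As : 'M[R]_(2, M)) (Bs : 'cV[R]_M)
  (h : pt R -> R) (t0 t1 delta : R) (u p : R -> pt R) :
  workspace_ok G O ->
  harmonic_homeo G O D T Tinv ->
  (exists v, input_set As Bs v) ->
  predicate_ok G O h ->
  0 <= t0 -> t0 < t1 -> 0 < delta -> delta < t1 - t0 ->
  (forall t : R, 0 <= t -> input_set As Bs (u t)) ->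
  interior (Wsp G O) (p 0) ->
  (forall t : R, 0 <= t -> is_derive t 1 p (u t)) ->
  (forall t : R, 0 <= t -> Wsp G O (p t)) ->
  BF D Tinv h t0 t1 delta 0 (T (p 0)) ->
  forward_invariant (BF D Tinv h t0 t1 delta) (fun t => T (p t)) ->
  sat_eventually h p t0 t1 0.
Proof.
move=> _ [Dunit [TW [TinvT [_ [_ [cTinv _]]]]]] _ [_ [cH [[x0 Hx0] _]]].
move=> t0_ge0 _ delta_gt0 delta_lt _ _ _ pW B0 inv.
have DW : Tinv @` D `<=` Wsp G O.
  by move=> _ [y + <-]; rewrite -TW => -[x Wx <-]; rewrite TinvT.
have HT_neq0 : HTset D Tinv h !=set0.
  by case: Hx0 => Wx0 hx0; exists (T x0); split; [rewrite -TW; exists x0|rewrite TinvT].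
have t0_le_t : t0 <= t1 - delta by lra.
have Wpt : Wsp G O (p (t1 - delta)) by apply: pW; lra.
exists (t1 - delta); split; first by rewrite !add0r t0_le_t gerBl ltW.
have [Dq] := inv B0 (t1 - delta) ltac:(lra).
rewrite /bF sigma2_eq1 // mul1r => hTq.
by rewrite -(TinvT _ Wpt); exact: h_ge0_of_hT_ge0 Dunit cTinv DW cH HT_neq0 Dq hTq.
Qed.
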